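(* Assume $\mathcal M$ satisfies extensibility. Let $\lambda\in\mathbb R^A$, $\lambda>0$, whose partition of $A$ by equality of $\lambda_i$ is $S_1,\dots,S_{k-1},A'$ with $\lambda(S_1)<\dots<\lambda(S_{k-1})<\lambda(A')$. Let $S_k\subset A'$ and let $\lambda'\ge\lambda$ (componentwise, $\lambda'>0$) be such that its partition by equality of $\lambda'_i$ is $S_1,\dots,S_k,A'\setminus S_k$ with $\lambda'(S_1)<\dots<\lambda'(S_k)<\lambda'(A'\setminus S_k)$. Then for every $g<k$: $\mathrm{delay}_{S_g}(X)=\mathrm{delay}_{S_g}(X')$ for any optimal solution $X$ of $LP(\lambda)$ and any optimal solution $X'$ of $LP(\lambda')$; and for every $T\subseteq S_g$, $\max\{\mathrm{delay}_T(X): X\text{ optimal for }LP(\lambda)\}=\max\{\mathrm{delay}_T(X): X\text{ optimal for }LP(\lambda')\}$.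
   Context: A market $\mathcal M$: finite agent set $A$, finite goods set $G$ (supply $1$ each), finite index set $C$; agent $i$ has real coefficients $a_{ijk}$, requirements $r_{ik}\ge0$, delays $d_{ij}\ge0$. CC$(i)$: $\sum_ja_{ijk}x_{ij}\ge r_{ik}$ for all $k$, $x_{ij}\ge0$. An allocation $X\ge0$ is supply respecting if $\sum_ix_{ij}\le1$ for all $j$. For $S\subseteq A$, $X$ is jointly optimal for $S$ if it satisfies CC$(i)$ for all $i\in S$, is supply respecting, and minimizes $\sum_{i\in S}\sum_jd_{ij}x_{ij}$ among such allocations. Extensibility: for every $S\subset A$, every $X$ jointly optimal for $S$ and every $i\in A\setminus S$, there is $X'$ jointly optimal for $S\cup\{i\}$ with $\sum_jd_{i'j}x'_{i'j}=\sum_jd_{i'j}x_{i'j}$ for all $i'\in S$. $LP(\lambda)$: minimize $\sum_i\lambda_i\sum_jd_{ij}x_{ij}$ s.t. $\sum_ja_{ijk}x_{ij}\ge r_{ik}$ for all $(i,k)$, $\sum_ix_{ij}\le1$ for all $j$, $x\ge0$ (assumed feasible). $\mathrm{delay}_S(X)=\sum_{i\in S}\sum_jd_{ij}x_{ij}$; $\lambda(S)$ is the common value of $\lambda_i$ on $S$. *)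

From HB Require Import structures.
From mathcomp Require Import all_boot all_order all_algebra.
Set Implicit Arguments. Unset Strict Implicit. Unset Printing Implicit Defensive.
Import Order.TTheory GRing.Theory Num.Theory.
Local Open Scope ring_scope.

Section Market.
Variables (R : realFieldType) (A G C : finType).
Variables (a : A -> G -> C -> R) (r : A -> C -> R) (d : A -> G -> R).

Definition nonneg (X : A -> G -> R) : Prop := forall i j, 0 <= X i j.

Definition CC (i : A) (X : A -> G -> R) : Prop :=
  (forall k, r i k <= \sum_j a i j k * X i j) /\ (forall j, 0 <= X i j).

Definition supply_respecting (X : A -> G -> R) : Prop :=
  nonneg X /\ forall j, \sum_i X i j <= 1.

Definition delay (S : {set A}) (X : A -> G -> R) : R :=
  \sum_(i in S) \sum_j d i j * X i j.

Definition jfeasible (S : {set A}) (X : A -> G -> R) : Prop :=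
  (forall i, i \in S -> CC i X) /\ supply_respecting X.

Definition jointly_optimal (S : {set A}) (X : A -> G -> R) : Prop :=
  jfeasible S X /\ forall Y, jfeasible S Y -> delay S X <= delay S Y.

Definition extensibility : Prop :=
  forall (S : {set A}) (X : A -> G -> R) (i : A),
    S \proper [set: A] -> jointly_optimal S X -> i \notin S ->
    exists X', jointly_optimal (i |: S) X' /\
      forall i', i' \in S ->
        \sum_j d i' j * X' i' j = \sum_j d i' j * X i' j.

Definition LPfeasible (X : A -> G -> R) : Prop := jfeasible [set: A] X.

Definition LPobj (lam : A -> R) (X : A -> G -> R) : R :=
  \sum_i lam i * \sum_j d i j * X i j.

Definition LPoptimal (lam : A -> R) (X : A -> G -> R) : Prop :=
  LPfeasible X /\ forall Y, LPfeasible Y -> LPobj lam X <= LPobj lam Y.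

Definition is_max_delay (lam : A -> R) (T : {set A}) (m : R) : Prop :=
  (exists X, LPoptimal lam X /\ delay T X = m) /\
  (forall X, LPoptimal lam X -> delay T X <= m).

End Market.

(* P (an ordered list of blocks) is the partition of A into classes of equal
   lam-value, listed in strictly increasing order of the common value:
   blocks are nonempty, cover A, and for i in block g, j in block h,
   lam i < lam j iff g < h (this forces lam constant on each block,
   distinct values on distinct blocks, and disjointness). *)
Definition level_partition (R : realFieldType) (A : finType)
    (lam : A -> R) (P : seq {set A}) : Prop :=
  (forall g, (g < size P)%N -> nth set0 P g != set0) /\
  (forall i, exists g, (g < size P)%N /\ i \in nth set0 P g) /\
  (forall g h i j, (g < size P)%N -> (h < size P)%N ->
      i \in nth set0 P g -> j \in nth set0 P h ->
      (lam i < lam j <-> (g < h)%N)).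

(* Call an allocation levelwise optimal for [lam] if it is jointly optimal for
   every upper level set [level_ge lam c], [c > 0].  Extensibility, applied level
   by level from the top, produces such allocations, and since the LP objective
   is by Abel summation a nonnegative combination of the delays of the upper
   level sets, they are exactly the optimal solutions of LP(lam).  So every
   optimal solution has, on each upper level set U, the delay of the joint
   optimum for U.  For g < k the upper level sets of [lam] and [lam'] through
   S_g coincide and S_g is their difference, which gives the first claim.  For
   T inside S_g, lowering [lam] slightly on T only splits a level, so some
   optimal solution is also jointly optimal on U minus T; hence the maximal
   delay on T is opt(U) - opt(U minus T), again determined by the common U. *)

From HB Require Import structures.
From mathcomp Require Import all_boot all_order all_algebra.
From mathcomp Require Import zify ring lra.
Import Order.TTheory GRing.Theory Num.Theory.
Local Open Scope ring_scope.
Set Implicit Arguments. Unset Strict Implicit. Unset Printing Implicit Defensive.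

Notation level_ge lam c := [set i | c <= lam i].
Notation level_gt lam c := [set i | c < lam i].

Section Market.
Variables (R : realFieldType) (A G C : finType).
Variables (a : A -> G -> C -> R) (r : A -> C -> R) (d : A -> G -> R).
Hypothesis hext : extensibility a r d.

Local Notation jfeasible := (jfeasible a r).
Local Notation jointly_optimal := (jointly_optimal a r d).
Local Notation delay := (delay d).
Local Notation agent_delay i X := (\sum_j d i j * X i j).

Lemma jfeasible_subset (S U : {set A}) X :
  S \subset U -> jfeasible U X -> jfeasible S X.
Proof. by move=> sSU [hCC hX]; split=> // i /(subsetP sSU); apply: hCC. Qed.

Lemma delay_setID (U T : {set A}) X :
  T \subset U -> delay U X = delay T X + delay (U :\: T) X.
Proof. by move=> sTU; rewrite /delay (big_setID T) /= (setIidPr sTU). Qed.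

Lemma jointly_optimal_delay_eq S X Y :
  jointly_optimal S X -> jointly_optimal S Y -> delay S X = delay S Y.
Proof. by move=> [fX oX] [fY oY]; apply/le_anti; rewrite oX // oY. Qed.

Lemma jointly_optimal_delay_setD_eq (U V : {set A}) X X' : V \subset U ->
  jointly_optimal U X -> jointly_optimal U X' ->
  jointly_optimal V X -> jointly_optimal V X' ->
  delay (U :\: V) X = delay (U :\: V) X'.
Proof.
move=> sVU oUX oUX' oVX oVX'; apply: (@addrI _ (delay V X)).
rewrite {2}(jointly_optimal_delay_eq oVX oVX') -!delay_setID //.
exact: jointly_optimal_delay_eq.
Qed.

Lemma supply_respecting0 : supply_respecting (fun (_ : A) (_ : G) => 0 : R).
Proof. by split=> // j; rewrite big1 ?ler01. Qed.

Lemma jointly_optimal_set0 X : supply_respecting X -> jointly_optimal set0 X.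
Proof.
move=> hX; split; first by split=> // i; rewrite inE.
by move=> Y _; rewrite /delay !big_set0.
Qed.

Lemma jointly_optimal_eq_delay S X X' : jointly_optimal S X -> jfeasible S X' ->
  delay S X' = delay S X -> jointly_optimal S X'.
Proof. by move=> [_ oX] fX' eqX; split=> // Y fY; rewrite eqX; apply: oX. Qed.

Lemma extend_jointly_optimal (S U : {set A}) X :
  S \subset U -> jointly_optimal S X ->
  exists X', jointly_optimal U X' /\
    forall i, i \in S -> agent_delay i X' = agent_delay i X.
Proof.
have [n] := ubnP #|U :\: S|; elim: n S X => // n IH S X ltn sSU oX.
have [US0|[i]] := set_0Vmem (U :\: S).
  have -> : U = S by apply/eqP; rewrite eqEsubset sSU andbT -setD_eq0 US0.
  by exists X.
rewrite inE => /andP [iS iU].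
have prS : S \proper [set: A].
  by rewrite properT; apply: contraNneq iS => ->; rewrite inE.
have [X1 [oX1 eqX1]] := hext prS oX iS.
have siSU : i |: S \subset U by rewrite subUset sub1set iU.
have ltn1 : (#|U :\: (i |: S)| < n)%N.
  rewrite -ltnS; apply: leq_trans ltn; rewrite ltnS; apply: proper_card.
  rewrite properEneq setDS ?subsetUr //.
  rewrite andbT; apply/eqP => /setP /(_ i).
  by rewrite !inE eqxx iU iS.
have [X2 [oX2 eqX2]] := IH _ _ ltn1 siSU oX1.
by exists X2; split=> // j jS; rewrite eqX2 ?eqX1 // inE jS orbT.
Qed.

Lemma exists_jointly_optimal U : exists X, jointly_optimal U X.
Proof.
have [X [oX _]] :=
  extend_jointly_optimal (sub0set U) (jointly_optimal_set0 supply_respecting0).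
by exists X.
Qed.

Section Levels.
Variable lam : A -> R.

Lemma level_gt_next c :
  level_gt lam c = set0 \/
  exists m, [/\ c < m, level_gt lam c = level_ge lam m
             & (#|level_gt lam m| < #|level_gt lam c|)%N].
Proof.
have [->|[i0 i0c]] := set_0Vmem (level_gt lam c); [by left | right].
have [i1 i1c' i1_min'] := arg_minP lam i0c.
have c_lt : c < lam i1 by have : i1 \in level_gt lam c := i1c'; rewrite inE.
have i1_min j : j \in level_gt lam c -> lam i1 <= lam j := i1_min' j.
exists (lam i1); split=> //.
  apply/setP => j; rewrite !inE; apply/idP/idP => [cj|]; first by apply: i1_min; rewrite inE.
  exact: lt_le_trans.
apply: proper_card; rewrite properEneq; apply/andP; split.
  by apply/eqP => /setP /(_ i1); rewrite !inE ltxx c_lt.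
by apply/subsetP => j; rewrite !inE; apply: lt_trans.
Qed.

Lemma level_ge_gt_set0 c c' :
  level_gt lam c = set0 -> c < c' -> level_ge lam c' = set0.
Proof.
move=> gt0 cc'; apply/setP => i; rewrite !inE; apply/negbTE/negP => c'i.
by move/setP/(_ i): gt0; rewrite !inE (lt_le_trans cc' c'i).
Qed.

Lemma level_ge_between c m c' : level_gt lam c = level_ge lam m ->
  c < c' -> c' <= m -> level_ge lam c' = level_ge lam m.
Proof.
move=> gtE cc' c'm; apply/setP => i; rewrite !inE; apply/idP/idP => [c'i|]; last exact: le_trans.
by move/setP/(_ i): gtE; rewrite !inE (lt_le_trans cc' c'i) => <-.
Qed.

Definition levelwise_optimal Z :=
  LPfeasible a r Z /\ forall c, 0 < c -> jointly_optimal (level_ge lam c) Z.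

Lemma levelwise_optimal_gt Z c :
  levelwise_optimal Z -> 0 <= c -> jointly_optimal (level_gt lam c) Z.
Proof.
move=> [[_ hZ] oZ] c0; have [->|[m [cm -> _]]] := level_gt_next c.
  exact: jointly_optimal_set0.
by apply: oZ; apply: le_lt_trans cm.
Qed.

Definition excess_cost c X := \sum_(i in level_gt lam c) (lam i - c) * agent_delay i X.

Lemma excess_cost_split c m X : level_gt lam c = level_ge lam m -> c < m ->
  excess_cost c X = (m - c) * delay (level_ge lam m) X + excess_cost m X.
Proof.
move=> gtE cm; rewrite /excess_cost /delay mulr_sumr -gtE.
rewrite (eq_bigr (fun i => (m - c) * agent_delay i X + (lam i - m) * agent_delay i X));
  last by move=> i _; ring.
rewrite big_split /=; congr (_ + _).
rewrite [RHS]big_mkcond [LHS]big_mkcond /=; apply: eq_bigr => i _.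
have gtEi : (c < lam i) = (m <= lam i) by move/setP/(_ i): gtE; rewrite !inE.
rewrite !inE gtEi le_eqVlt; case: eqP => [<-|_] //=.
by rewrite subrr mul0r ltxx.
Qed.

(* Abel summation: the excess cost above [c] is a nonnegative combination of
   the delays of the upper level sets above [c], each of which [Z] minimizes. *)
Lemma excess_cost_levelwise_optimal Z Y c :
  levelwise_optimal Z -> LPfeasible a r Y -> 0 <= c ->
  excess_cost c Z <= excess_cost c Y /\
  (excess_cost c Z = excess_cost c Y ->
   forall c', c < c' -> delay (level_ge lam c') Z = delay (level_ge lam c') Y).
Proof.
move=> oZ fY; have [n] := ubnP #|level_gt lam c|; elim: n c => // n IH c ltn c0.
have [gt0|[m [cm gtE ltm]]] := level_gt_next c.
  rewrite /excess_cost gt0 !big_set0; split=> // _ c' cc'.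
  by rewrite (level_ge_gt_set0 gt0 cc') /delay !big_set0.
have m0 : 0 < m by apply: le_lt_trans cm.
have [le_m eq_m] := IH m (leq_trans ltm ltn) (ltW m0).
have le_Um : delay (level_ge lam m) Z <= delay (level_ge lam m) Y.
  by apply: (proj2 oZ m m0).2; apply: jfeasible_subset fY; apply: subsetT.
have mc0 : 0 < m - c by rewrite subr_gt0.
rewrite !(excess_cost_split _ gtE cm).
split=> [|eq_c]; first by apply: lerD => //; rewrite ler_wpM2l // ltW.
have eq_Um : delay (level_ge lam m) Z = delay (level_ge lam m) Y.
  apply/le_anti; rewrite le_Um -(ler_pM2l mc0) /=.
  by move: eq_c le_m; rewrite -(ler_pM2l mc0) in le_Um; lra.
move=> c' cc'; have [c'm|mc'] := leP c' m; first by rewrite (level_ge_between gtE cc' c'm).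
by apply: eq_m mc'; move: eq_c; rewrite eq_Um; lra.
Qed.

Lemma LPobj_excess_cost X : (forall i, 0 < lam i) -> LPobj d lam X = excess_cost 0 X.
Proof.
move=> lam_gt0; apply: eq_big => [i|i _]; first by rewrite inE lam_gt0.
by rewrite subr0.
Qed.

Lemma levelwise_optimal_LPoptimal Z :
  (forall i, 0 < lam i) -> levelwise_optimal Z -> LPoptimal a r d lam Z.
Proof.
move=> lam_gt0 oZ; split=> [|Y fY]; first by case: oZ.
by rewrite !LPobj_excess_cost //; case: (excess_cost_levelwise_optimal oZ fY (lexx 0)).
Qed.

Lemma exists_jointly_optimal_levels c : 0 <= c ->
  exists Z, jointly_optimal (level_gt lam c) Z /\
            forall c', c < c' -> jointly_optimal (level_ge lam c') Z.
Proof.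
have [n] := ubnP #|level_gt lam c|; elim: n c => // n IH c ltn c0.
have [gt0|[m [cm gtE ltm]]] := level_gt_next c.
  exists (fun _ _ => 0); rewrite gt0; split=> [|c' cc'].
    exact: jointly_optimal_set0 supply_respecting0.
  by rewrite (level_ge_gt_set0 gt0 cc'); exact: jointly_optimal_set0 supply_respecting0.
have [Z [oZ oZ_ge]] := IH m (leq_trans ltm ltn) (le_trans c0 (ltW cm)).
have gt_ge_m : level_gt lam m \subset level_ge lam m.
  by apply/subsetP => i; rewrite !inE; apply: ltW.
have [Z' [oZ' eqZ']] := extend_jointly_optimal gt_ge_m oZ.
exists Z'; rewrite gtE; split=> // c' cc'.
have [c'm|mc'] := leP c' m; first by rewrite (level_ge_between gtE cc' c'm).
have ge_gt : level_ge lam c' \subset level_gt lam m.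
  by apply/subsetP => i; rewrite !inE; apply: lt_le_trans.
apply: (jointly_optimal_eq_delay (oZ_ge c' mc')).
  by apply: jfeasible_subset (proj1 oZ'); apply: subset_trans ge_gt gt_ge_m.
by apply: eq_bigr => i /(subsetP ge_gt) /eqZ'.
Qed.

Lemma exists_levelwise_optimal : (forall i, 0 < lam i) -> exists Z, levelwise_optimal Z.
Proof.
move=> lam_gt0; have [Z [oZ oZ_ge]] := exists_jointly_optimal_levels (lexx 0).
exists Z; split=> //; case: oZ => fZ _.
by apply: jfeasible_subset fZ; apply/subsetP => i _; rewrite inE lam_gt0.
Qed.

Lemma LPoptimal_levelwise_optimal X :
  (forall i, 0 < lam i) -> LPoptimal a r d lam X -> levelwise_optimal X.
Proof.
move=> lam_gt0 [fX oX]; have [Z oZ] := exists_levelwise_optimal lam_gt0.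
have [le_Z eq_Z] := excess_cost_levelwise_optimal oZ fX (lexx 0).
have eq_obj : excess_cost 0 Z = excess_cost 0 X.
  by apply/le_anti; rewrite le_Z -!LPobj_excess_cost // oX //; case: oZ.
split=> // c c0; apply: (jointly_optimal_eq_delay (proj2 oZ c c0)).
  by apply: jfeasible_subset fX; apply: subsetT.
by rewrite (eq_Z eq_obj c c0).
Qed.

End Levels.

Lemma levelwise_optimal_coarsen (lam lam2 : A -> R) Z :
  (forall c, 0 < c -> exists2 c2, 0 < c2 & level_ge lam c = level_ge lam2 c2) ->
  levelwise_optimal lam2 Z -> levelwise_optimal lam Z.
Proof. by move=> coarse [fZ oZ]; split=> // c /coarse [c2 c20 ->]; apply: oZ. Qed.

(* [lam2] moves [T] strictly between [c] and the largest value of [lam] below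
   [c] (or [0]): this splits the level [c] of [lam] and changes nothing else. *)
Lemma split_level (lam : A -> R) c (T : {set A}) :
  (forall i, 0 < lam i) -> 0 < c -> (forall i, i \in T -> lam i = c) ->
  exists lam2 : A -> R, [/\ forall i, 0 < lam2 i,
    forall t, 0 < t -> exists2 t2, 0 < t2 & level_ge lam t = level_ge lam2 t2
    & level_ge lam c :\: T = level_ge lam2 c].
Proof.
move=> lam_gt0 c0 lamT.
pose p := \big[Order.max/0]_(j | lam j < c) lam j.
have p0 : 0 <= p by apply: bigmax_ge_id.
have pc : p < c by apply: bigmax_lt.
have le_p j : lam j < c -> lam j <= p by apply: le_bigmax_cond.
pose q := (c + p) / 2.
have pq : p < q by rewrite /q; lra.
have qc : q < c by rewrite /q; lra.
exists (fun i => if i \in T then q else lam i); split.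
- by move=> i; case: ifP => _ //; lra.
- move=> t t0; have [tp|pt] := leP t p.
    exists t => //; apply/setP => i; rewrite !inE; case: ifP => // /lamT ->.
    by apply/idP/idP => ?; lra.
  have [tc|ct] := leP t c.
    exists q; first lra.
    apply/setP => i; rewrite !inE; case: ifP => [/lamT -> | _]; first by rewrite tc lexx.
    have [/le_p|] := ltP (lam i) c; last by move=> ci; apply/idP/idP => ?; lra.
    by move=> ip; apply/idP/idP => ?; lra.
  exists t => //; apply/setP => i; rewrite !inE; case: ifP => // /lamT ->.
  by apply/idP/idP => ?; lra.
- apply/setP => i; rewrite !inE; case: ifP => //= _.
  by apply/esym/negbTE; rewrite -ltNge.
Qed.

Lemma LPoptimal_jointly_optimal_level (lam : A -> R) c X :
  (forall i, 0 < lam i) -> 0 < c -> LPoptimal a r d lam X ->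
  jointly_optimal (level_ge lam c) X /\ jointly_optimal (level_gt lam c) X.
Proof.
move=> lam_gt0 c0 /(LPoptimal_levelwise_optimal lam_gt0) oX.
by split; [apply: (proj2 oX) | apply: levelwise_optimal_gt (ltW c0)].
Qed.

Lemma is_max_delay_level (lam : A -> R) c (T : {set A}) Y1 Y2 :
  (forall i, 0 < lam i) -> 0 < c -> (forall i, i \in T -> lam i = c) ->
  jointly_optimal (level_ge lam c) Y1 -> jointly_optimal (level_ge lam c :\: T) Y2 ->
  is_max_delay a r d lam T
    (delay (level_ge lam c) Y1 - delay (level_ge lam c :\: T) Y2).
Proof.
move=> lam_gt0 c0 lamT oY1 oY2.
have sTU : T \subset level_ge lam c by apply/subsetP => i iT; rewrite inE lamT.
have delayTE X : delay T X = delay (level_ge lam c) X - delay (level_ge lam c :\: T) X.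
  by rewrite (delay_setID X sTU) addrK.
have [lam2 [lam2_gt0 coarse geE]] := split_level lam_gt0 c0 lamT.
have [Z oZ2] := exists_levelwise_optimal lam2_gt0.
have oZ := levelwise_optimal_coarsen coarse oZ2.
split.
  exists Z; split; first exact: levelwise_optimal_LPoptimal.
  rewrite delayTE (jointly_optimal_delay_eq (proj2 oZ c c0) oY1).
  by rewrite (jointly_optimal_delay_eq _ oY2) // geE; apply: (proj2 oZ2 c c0).
move=> X /(LPoptimal_levelwise_optimal lam_gt0) [fX oX].
rewrite delayTE (jointly_optimal_delay_eq (oX c c0) oY1) lerB //.
by apply: (proj2 oY2); apply: jfeasible_subset fX; apply: subsetT.
Qed.

End Market.

Section LevelPartition.
Variables (R : realFieldType) (A : finType) (lam : A -> R) (P : seq {set A}).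
Hypothesis hP : level_partition lam P.

Definition lower_blocks h := \bigcup_(t < h) nth set0 P t.

Lemma level_partition_ltE h t i j : i \in nth set0 P h -> j \in nth set0 P t ->
  (lam i < lam j) = (h < t)%N.
Proof.
have ltsz s x : x \in nth set0 P s -> (s < size P)%N.
  by apply: contraTT; rewrite -leqNgt => /(nth_default set0) ->; rewrite inE.
move=> ih jt; have iffE := hP.2.2 h t i j (ltsz _ _ ih) (ltsz _ _ jt) ih jt.
by apply/idP/idP => /iffE.
Qed.

Lemma level_partition_uniq h t i : i \in nth set0 P h -> i \in nth set0 P t -> h = t.
Proof.
move=> ih it; apply/eqP; rewrite eqn_leq leqNgt -(level_partition_ltE it ih) ltxx.
by rewrite leqNgt -(level_partition_ltE ih it) ltxx.
Qed.

Lemma level_partition_block_eq h i j :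
  i \in nth set0 P h -> j \in nth set0 P h -> lam j = lam i.
Proof.
move=> ih jh; apply/le_anti; rewrite !leNgt.
by rewrite (level_partition_ltE ih jh) (level_partition_ltE jh ih) ltnn.
Qed.

Lemma mem_lower_blocks h t j : j \in nth set0 P t -> (j \in lower_blocks h) = (t < h)%N.
Proof.
move=> jt; apply/bigcupP/idP => [[s _ js]|th]; last by exists (Ordinal th).
by rewrite -(level_partition_uniq js jt) ltn_ord.
Qed.

Lemma level_ge_blocks h i : i \in nth set0 P h ->
  level_ge lam (lam i) = ~: lower_blocks h.
Proof.
move=> ih; apply/setP => j; have [t [_ jt]] := hP.2.1 j.
by rewrite !inE (mem_lower_blocks _ jt) leNgt (level_partition_ltE jt ih).
Qed.

Lemma level_gt_blocks h i : i \in nth set0 P h ->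
  level_gt lam (lam i) = ~: lower_blocks h.+1.
Proof.
move=> ih; apply/setP => j; have [t [_ jt]] := hP.2.1 j.
by rewrite !inE (mem_lower_blocks _ jt) (level_partition_ltE ih jt) ltnS ltnNge.
Qed.

Lemma block_levelE h i : i \in nth set0 P h ->
  nth set0 P h = level_ge lam (lam i) :\: level_gt lam (lam i).
Proof.
move=> ih; apply/setP => j; have [t [_ jt]] := hP.2.1 j.
rewrite (level_ge_blocks ih) (level_gt_blocks ih) !inE !(mem_lower_blocks _ jt).
rewrite negbK ltnS -leqNgt -eqn_leq.
by apply/idP/eqP => [jh|<-//]; apply: level_partition_uniq jt jh.
Qed.

End LevelPartition.

Lemma level_sets_eq_of_prefix (R : realFieldType) (A : finType) (lam lam' : A -> R)
    (P P' : seq {set A}) h i :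
  level_partition lam P -> level_partition lam' P' ->
  (forall t, (t <= h)%N -> nth set0 P t = nth set0 P' t) -> i \in nth set0 P h ->
  level_ge lam' (lam' i) = level_ge lam (lam i) /\
  level_gt lam' (lam' i) = level_gt lam (lam i).
Proof.
move=> hP hP' agree ih; have ih' : i \in nth set0 P' h by rewrite -agree.
have lowerE n : (n <= h.+1)%N -> lower_blocks P' n = lower_blocks P n.
  by move=> nh; apply: eq_bigr => t _; rewrite agree //; have := ltn_ord t; lia.
rewrite (level_ge_blocks hP' ih') (level_ge_blocks hP ih) lowerE //.
by rewrite (level_gt_blocks hP' ih') (level_gt_blocks hP ih) lowerE.
Qed.

Lemma nth_map_iota_cat (A : finType) (S : nat -> {set A}) n B t : (t < n)%N ->
  nth set0 ([seq S g | g <- iota 1 n] ++ [:: B]) t = S t.+1.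
Proof.
by move=> tn; rewrite nth_cat size_map size_iota tn (nth_map 0%N) ?size_iota ?nth_iota.
Qed.

Theorem lemmaF5 (R : realFieldType) (A G C : finType)
    (a : A -> G -> C -> R) (r : A -> C -> R) (d : A -> G -> R)
    (hr : forall i k, 0 <= r i k) (hd : forall i j, 0 <= d i j)
    (hfeas : exists X, LPfeasible a r X)
    (hext : extensibility a r d)
    (k : nat) (hk : (0 < k)%N) (S : nat -> {set A}) (A' : {set A})
    (lam lam' : A -> R)
    (hlam : forall i, 0 < lam i) (hlam' : forall i, 0 < lam' i)
    (hle : forall i, lam i <= lam' i)
    (hP : level_partition lam ([seq S g | g <- iota 1 k.-1] ++ [:: A']))
    (hSk : S k \subset A')
    (hP' : level_partition lam' ([seq S g | g <- iota 1 k] ++ [:: A' :\: S k])) :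
  forall g : nat, (1 <= g < k)%N ->
    (forall X X', LPoptimal a r d lam X -> LPoptimal a r d lam' X' ->
        delay d (S g) X = delay d (S g) X') /\
    (forall T : {set A}, T \subset S g ->
        exists m, is_max_delay a r d lam T m /\ is_max_delay a r d lam' T m).
Proof.
move=> g /andP [g_gt0 g_lt_k].
set P := _ ++ _ in hP; set P' := _ ++ _ in hP'.
have Sg : nth set0 P g.-1 = S g by rewrite nth_map_iota_cat ?prednK //; lia.
have Sg' : nth set0 P' g.-1 = S g by rewrite nth_map_iota_cat ?prednK //; lia.
have [i0 i0S] : exists i0, i0 \in S g.
  have [Sg0|[i iS]] := set_0Vmem (S g); last by exists i.
  have /(_ g.-1 _)/negP[] := hP.1; last by rewrite Sg Sg0.
  by rewrite size_cat size_map size_iota addn1 prednK //; lia.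
have i0P : i0 \in nth set0 P g.-1 by rewrite Sg.
have [geE gtE] : level_ge lam' (lam' i0) = level_ge lam (lam i0) /\
                 level_gt lam' (lam' i0) = level_gt lam (lam i0).
  by apply: level_sets_eq_of_prefix hP hP' _ i0P => t tg; rewrite !nth_map_iota_cat //; lia.
set U := level_ge lam (lam i0) in geE *; set V := level_gt lam (lam i0) in gtE *.
have lamS i : i \in S g -> lam i = lam i0 /\ lam' i = lam' i0.
  move=> iS; split; first by apply: (level_partition_block_eq hP i0P); rewrite Sg.
  by apply: (level_partition_block_eq hP' (i := i0) (h := g.-1)); rewrite Sg'.
split=> [X X' oX oX'|T sT].
  have [oUX oVX] := LPoptimal_jointly_optimal_level hext hlam (hlam i0) oX.
  have [oUX' oVX'] := LPoptimal_jointly_optimal_level hext hlam' (hlam' i0) oX'.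
  rewrite geE gtE in oUX' oVX'; rewrite -Sg (block_levelE hP i0P).
  apply: (jointly_optimal_delay_setD_eq _ oUX oUX' oVX oVX').
  by apply/subsetP => i; rewrite !inE; apply: ltW.
have [Y1 oY1] := exists_jointly_optimal hext U.
have [Y2 oY2] := exists_jointly_optimal hext (U :\: T).
exists (delay d U Y1 - delay d (U :\: T) Y2); split.
  by apply: is_max_delay_level => // i /(subsetP sT) /lamS [].
rewrite -geE in oY1 oY2 *.
by apply: is_max_delay_level => // i /(subsetP sT) /lamS [].
Qed.
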